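(* Let $S$ be a compact semigroupoid with open multiplication, and let $T$ be a subsemigroupoid of $S$ that is factorial and dense in $S$. Then $S$ is equidivisible if and only if $T$ is equidivisible.
   Context: A semigroupoid is a graph (vertices, edges, source/range maps $\alpha,\omega$) with associative partial multiplication defined exactly on $D(S)=\{(s,t):\alpha(s)=\omega(t)\}$; $S^I$ adjoins a local identity at each vertex. A compact semigroupoid carries a compact Hausdorff topology in which vertices and edges form closed sets and $\alpha,\omega$ and multiplication are continuous; multiplication is open if $D(S)\to E(S)$ maps open sets to open sets. $T$ is factorial in $S$ if $st\in T$ implies $s,t\in T$. $S$ is equidivisible if whenever $uv=xy$ there is $t\in E(S^I)$ with ($ut=x$ and $v=ty$) or ($xt=u$ and $y=tv$) (for $T$, with $t\in E(T^I)$). *)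

From mathcomp Require Import all_boot all_order.
From mathcomp Require Import all_classical all_reals topology.
Set Implicit Arguments. Unset Strict Implicit. Unset Printing Implicit Defensive.
Local Open Scope classical_set_scope.

(* A semigroupoid with vertex type V and edge type E: source map alpha,
   range map omega, and a multiplication, only meaningful on
   D(S) = {(s,t) | alpha s = omega t}. *)
Record semigroupoid (V E : Type) := Semigroupoid {
  alpha : E -> V;
  omega : E -> V;
  mul : E -> E -> E;
  mul_alpha : forall s t, alpha s = omega t -> alpha (mul s t) = alpha t;
  mul_omega : forall s t, alpha s = omega t -> omega (mul s t) = omega s;
  mul_assoc : forall s t u, alpha s = omega t -> alpha t = omega u ->
    mul (mul s t) u = mul s (mul t u)
}.

Section Defs.
Context {V E : Type} (S : semigroupoid V E).

Definition composable (s t : E) : Prop := alpha S s = omega S t.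
Definition domS : set (E * E) := [set p | composable p.1 p.2].

(* S^I : edges E(S^I) = E + V, where [inr v] is the local identity at v. *)
Definition alphaI (a : E + V) : V := match a with inl e => alpha S e | inr v => v end.
Definition omegaI (a : E + V) : V := match a with inl e => omega S e | inr v => v end.
Definition composableI (a b : E + V) : Prop := alphaI a = omegaI b.
Definition mulI (a b : E + V) : E + V :=
  match a, b with
  | inl s, inl t => inl (mul S s t)
  | inl s, inr _ => inl s
  | inr _, inl t => inl t
  | inr v, inr _ => inr v
  end.

Definition subsemigroupoid (TV : set V) (TE : set E) : Prop :=
  (forall e, TE e -> TV (alpha S e) /\ TV (omega S e)) /\
  (forall s t, TE s -> TE t -> composable s t -> TE (mul S s t)).

Definition factorial_sub (TE : set E) : Prop :=
  forall s t, composable s t -> TE (mul S s t) -> TE s /\ TE t.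

(* The subsemigroupoid (TV,TE) is equidivisible (t ranging over E(T^I)).
   Equidivisibility of S itself is the case TV = setT, TE = setT. *)
Definition equidivisible_in (TV : set V) (TE : set E) : Prop :=
  forall u v x y, TE u -> TE v -> TE x -> TE y ->
    composable u v -> composable x y -> mul S u v = mul S x y ->
    exists t : E + V,
      (match t with inl e => TE e | inr w => TV w end) /\
      ((composableI (inl u) t /\ mulI (inl u) t = inl x /\
        composableI t (inl y) /\ inl v = mulI t (inl y)) \/
       (composableI (inl x) t /\ mulI (inl x) t = inl u /\
        composableI t (inl v) /\ inl y = mulI t (inl v))).

Definition equidivisible : Prop := equidivisible_in setT setT.
End Defs.

Section Top.
Context {V E : topologicalType} (S : semigroupoid V E).

(* Compact semigroupoid: the space V + E is compact Hausdorff with vertices and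
   edges closed (equivalently V and E are compact Hausdorff spaces), alpha, omega
   continuous, and multiplication continuous on D(S) (subspace topology). *)
Definition compact_semigroupoid : Prop :=
  compact [set: V] /\ hausdorff_space V /\
  compact [set: E] /\ hausdorff_space E /\
  continuous (alpha S) /\ continuous (omega S) /\
  {within domS S, continuous (fun p : E * E => mul S p.1 p.2)}.

Definition open_multiplication : Prop :=
  forall U : set (E * E), open U ->
    open ((fun p : E * E => mul S p.1 p.2) @` (U `&` domS S)).

(* T = (TV, TE) is dense in S (in V + E, i.e. TV dense in V and TE dense in E). *)
Definition dense_sub (TV : set V) (TE : set E) : Prop := dense TV /\ dense TE.
End Top.

From Pilot Require Import Defs.
From mathcomp Require Import all_boot all_order.
From mathcomp Require Import all_classical all_reals topology.
Set Implicit Arguments. Unset Strict Implicit. Unset Printing Implicit Defensive.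
Local Open Scope classical_set_scope.

(* If S is equidivisible, factoriality puts the witness of a factorization in T
   into T.  Conversely, let uv = xy in S have no witness in S^I.  Being a
   witness is a closed condition, so by compactness of E(S) the failure
   persists for all quadruples near ((u,v),(x,y)), say for (a,b) in N1 and
   (c,d) in N2.  Multiplication maps N1 and N2 onto open neighbourhoods of uv,
   so by density some ab = cd lies in T; factoriality puts a, b, c, d in T,
   and equidivisibility of T supplies a witness: contradiction. *)

Section EquidivisibleWitness.
Context {V E : Type} (S : semigroupoid V E).

Definition equidiv_witness (u v x y t : E) : Prop :=
  composable S u t /\ Defs.mul S u t = x /\
  composable S t y /\ v = Defs.mul S t y.

(* The local identities of S^I only witness the trivial factorization. *)
Definition equidiv_pair (u v x y : E) : Prop :=
  (u = x /\ v = y) \/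
  exists t, equidiv_witness u v x y t \/ equidiv_witness x y u v t.

Lemma equidivisible_inP (TV : set V) (TE : set E) :
  (forall e, TE e -> TV (alpha S e)) -> factorial_sub S TE ->
  equidivisible_in S TV TE <->
  (forall u v x y, TE u -> TE v -> TE x -> TE y ->
     composable S u v -> composable S x y -> Defs.mul S u v = Defs.mul S x y ->
     equidiv_pair u v x y).
Proof.
move=> TV_alpha fac; split=> [eqT u v x y Tu Tv Tx Ty uv xy uvxy|pairT].
  have [[t|w] [_ [[ut [[utx] [ty [vty]]]]|[xt [[xtu] [tv [ytv]]]]]]] :=
    eqT u v x y Tu Tv Tx Ty uv xy uvxy.
  - by right; exists t; left.
  - by right; exists t; right.
  - by left; rewrite /composableI /= in ut ty; case: utx => <-; case: vty.
  - by left; rewrite /composableI /= in xt tv; case: xtu => <-; case: ytv.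
move=> u v x y Tu Tv Tx Ty uv xy uvxy.
have [[<- <-]|[t [[ut [utx [ty vty]]]|[xt [xtu [tv ytv]]]]]] :=
  pairT u v x y Tu Tv Tx Ty uv xy uvxy.
- by exists (inr (alpha S u)); split; [exact: TV_alpha|left].
- exists (inl t); split; first by case: (fac u t ut); rewrite ?utx.
  by left; rewrite /composableI /= utx vty.
- exists (inl t); split; first by case: (fac x t xt); rewrite ?xtu.
  by right; rewrite /composableI /= xtu ytv.
Qed.

Lemma equidivisibleP :
  equidivisible S <->
  (forall u v x y, composable S u v -> composable S x y ->
     Defs.mul S u v = Defs.mul S x y -> equidiv_pair u v x y).
Proof.
rewrite /equidivisible equidivisible_inP //.
by split=> [pairS u v x y|pairS u v x y _ _ _ _]; apply: pairS.
Qed.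

End EquidivisibleWitness.

Lemma cvg_near_neq {Z : Type} {X : topologicalType} (F : set_system Z)
    {FF : Filter F} (f g : Z -> X) (a b : X) :
  hausdorff_space X -> f @ F --> a -> g @ F --> b -> a <> b ->
  \forall z \near F, f z <> g z.
Proof.
move=> hX fa gb /eqP; move: hX; rewrite open_hausdorff.
move=> /[apply] -[[A B] /= [Aa Bb] [oA oB /eqP AB0]].
have fA : \forall z \near F, A (f z).
  by apply: fa; apply: open_nbhs_nbhs; split=> //; rewrite -inE.
have gB : \forall z \near F, B (g z).
  by apply: gb; apply: open_nbhs_nbhs; split=> //; rewrite -inE.
near=> z => fg; suff : (A `&` B) (f z) by rewrite AB0.
by split; [apply: (near fA z) | rewrite fg; apply: (near gB z)].
Unshelve. all: end_near. Qed.

Section NearEquidivision.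
Context {V E : topologicalType} (S : semigroupoid V E).
Hypotheses (hausV : hausdorff_space V) (hausE : hausdorff_space E).
Hypotheses (alpha_cont : continuous (alpha S))
  (omega_cont : continuous (omega S)).
Hypothesis mul_cont :
  {within domS S, continuous (fun p : E * E => Defs.mul S p.1 p.2)}.

Lemma near_not_composable {Z : topologicalType} (f g : Z -> E) (z : Z) :
  {for z, continuous f} -> {for z, continuous g} ->
  ~ composable S (f z) (g z) -> \forall z' \near z, ~ composable S (f z') (g z').
Proof.
move=> cf cg nfg; apply: (@cvg_near_neq _ _ (nbhs z) _ _ _ _ _ hausV _ _ nfg).
- by apply: continuous_comp => //; apply: alpha_cont.
- by apply: continuous_comp => //; apply: omega_cont.
Qed.

Lemma near_mul_neq {Z : topologicalType} (f g h : Z -> E) (z : Z) :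
  {for z, continuous f} -> {for z, continuous g} -> {for z, continuous h} ->
  composable S (f z) (g z) -> Defs.mul S (f z) (g z) <> h z ->
  \forall z' \near z,
    composable S (f z') (g z') -> Defs.mul S (f z') (g z') <> h z'.
Proof.
move=> cf cg ch fg nfgh.
apply: (@cvg_near_neq _ _ (within _ (nbhs z)) _ _ _ _ _ hausE _ _ nfgh).
  have fg_dom : (fun z' => (f z', g z'))
      @ within (fun z' => composable S (f z') (g z')) (nbhs z)
      --> within (domS S) (nbhs (f z, g z)).
    by move=> A /(cvg_pair cf cg).
  exact: cvg_comp fg_dom ((subspace_continuousP _ _).1 mul_cont (f z, g z) fg).
exact: cvg_within_filter ch.
Qed.

Lemma near_not_equidiv_witness {Z : topologicalType} (fu fv fx fy ft : Z -> E)
    (z : Z) :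
  {for z, continuous fu} -> {for z, continuous fv} -> {for z, continuous fx} ->
  {for z, continuous fy} -> {for z, continuous ft} ->
  ~ equidiv_witness S (fu z) (fv z) (fx z) (fy z) (ft z) ->
  \forall z' \near z, ~ equidiv_witness S (fu z') (fv z') (fx z') (fy z') (ft z').
Proof.
move=> cu cv cx cy ct nW.
have [ut|nut] := pselect (composable S (fu z) (ft z)); last first.
  by apply: filterS (near_not_composable cu ct nut) => z' nut' [].
have [utx|nutx] := pselect (Defs.mul S (fu z) (ft z) = fx z); last first.
  apply: filterS (near_mul_neq cu ct cx ut nutx) => z' nutx' [ut' [utx' _]].
  exact: nutx' ut' utx'.
have [ty|nty] := pselect (composable S (ft z) (fy z)); last first.
  by apply: filterS (near_not_composable ct cy nty) => z' nty' [_ [_ []]].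
have ntyv : Defs.mul S (ft z) (fy z) <> fv z by move=> tyv; apply: nW.
apply: filterS (near_mul_neq ct cy cv ty ntyv) => z' ntyv' [_ [_ [ty' vty']]].
exact: ntyv' ty' (esym vty').
Qed.

Lemma near_not_equidiv_pair (u v x y : E) :
  compact [set: E] -> ~ equidiv_pair S u v x y ->
  \forall q \near ((u, v), (x, y)), ~ equidiv_pair S q.1.1 q.1.2 q.2.1 q.2.2.
Proof.
move=> cptE npair.
have not_trivial :
    \forall q \near ((u, v), (x, y)), ~ (q.1.1 = q.2.1 /\ q.1.2 = q.2.2).
  have [ux|nux] := pselect (u = x).
    have nvy : v <> y by move=> vy; apply: npair; left.
    apply: filterS (@cvg_near_neq _ _ (nbhs ((u, v), (x, y))) _
      (fun q => q.1.2) (fun q => q.2.2) _ _ hausE _ _ nvy) => [q nq [_] //| |];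
    by do ![apply: cvg_comp | exact: cvg_fst | exact: cvg_snd].
  apply: filterS (@cvg_near_neq _ _ (nbhs ((u, v), (x, y))) _
    (fun q => q.1.1) (fun q => q.2.1) _ _ hausE _ _ nux) => [q nq [] //| |];
  by do ![apply: cvg_comp | exact: cvg_fst | exact: cvg_snd].
pose no_witness (q : (E * E) * (E * E)) (t : E) :=
  ~ equidiv_witness S q.1.1 q.1.2 q.2.1 q.2.2 t /\
  ~ equidiv_witness S q.2.1 q.2.2 q.1.1 q.1.2 t.
have no_witness_near :
    \forall q \near ((u, v), (x, y)), [set: E] `<=` no_witness q.
  apply: ((compact_near_coveringP _).1 cptE _ (nbhs ((u, v), (x, y)))) => t _.
  have nW1 : ~ equidiv_witness S u v x y t.
    by move=> W; apply: npair; right; exists t; left.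
  have nW2 : ~ equidiv_witness S x y u v t.
    by move=> W; apply: npair; right; exists t; right.
  have near1 := @near_not_equidiv_witness _ (fun p => p.2.1.1) (fun p => p.2.1.2)
    (fun p => p.2.2.1) (fun p => p.2.2.2) fst (t, ((u, v), (x, y))).
  have near2 := @near_not_equidiv_witness _ (fun p => p.2.2.1) (fun p => p.2.2.2)
    (fun p => p.2.1.1) (fun p => p.2.1.2) fst (t, ((u, v), (x, y))).
  apply: filterS2 (near1 _ _ _ _ cvg_fst nW1) (near2 _ _ _ _ cvg_fst nW2);
    [by split | by do ![apply: cvg_comp | exact: cvg_fst | exact: cvg_snd] ..].
apply: filterS2 not_trivial no_witness_near => q nq nw [|[t [W|W]]] //.
- exact: (nw t I).1 W.
- exact: (nw t I).2 W.
Qed.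

Lemma equidiv_pair_of_dense (TE : set E) :
  compact [set: E] -> open_multiplication S -> dense TE -> factorial_sub S TE ->
  (forall u v x y, TE u -> TE v -> TE x -> TE y ->
     composable S u v -> composable S x y -> Defs.mul S u v = Defs.mul S x y ->
     equidiv_pair S u v x y) ->
  forall u v x y, composable S u v -> composable S x y ->
    Defs.mul S u v = Defs.mul S x y -> equidiv_pair S u v x y.
Proof.
move=> cptE mul_open denseT fac pairT u v x y uv xy uvxy.
apply: contrapT => npair.
have [[N1 N2] /= [N1uv N2xy] N12] := near_not_equidiv_pair cptE npair.
move: N1uv N2xy; rewrite !nbhsE => -[O1 [oO1 O1uv] O1N1] [O2 [oO2 O2xy] O2N2].
pose mulp (p : E * E) := Defs.mul S p.1 p.2.
have [_ [[[[a b] [O1ab ab] <-] [[c d] [O2cd cd] cdab]] Tab]] :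
    (mulp @` (O1 `&` domS S) `&` mulp @` (O2 `&` domS S)) `&` TE !=set0.
  apply: denseT; last exact: openI (mul_open _ oO1) (mul_open _ oO2).
  by exists (Defs.mul S u v); split; [exists (u, v) | exists (x, y)].
have [Ta Tb] := fac a b ab Tab.
have [Tc Td] : TE c /\ TE d by apply: (fac c d cd); rewrite -/(mulp (c, d)) cdab.
exact: N12 ((a, b), (c, d)) (conj (O1N1 _ O1ab) (O2N2 _ O2cd))
  (pairT a b c d Ta Tb Tc Td ab cd (esym cdab)).
Qed.

End NearEquidivision.

Theorem mainTheorem11 (V E : topologicalType) (S : semigroupoid V E)
  (TV : set V) (TE : set E) :
  compact_semigroupoid S -> open_multiplication S ->
  subsemigroupoid S TV TE -> factorial_sub S TE -> dense_sub TV TE ->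
  (equidivisible S <-> equidivisible_in S TV TE).
Proof.
move=> [_ [hausV [cptE [hausE [alpha_cont [omega_cont mul_cont]]]]]] mul_open
  [TE_ends _] fac [_ denseTE].
have TV_alpha e : TE e -> TV (alpha S e) by move=> /TE_ends [].
rewrite equidivisibleP (equidivisible_inP TV_alpha fac).
split=> [pairS u v x y _ _ _ _|pairT]; first exact: pairS.
exact: (equidiv_pair_of_dense hausV hausE alpha_cont omega_cont mul_cont
  cptE mul_open denseTE fac pairT).
Qed.
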